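(* Let $S$ and $T$ be semigroups. If $S\times T$ is finitely right equated, then so are $S$ and $T$.
   Context: For a semigroup $S$ and $a\in S$, $\mathbf{r}_S(a)=\{(s,t)\in S\times S\mid as=at\}$; $S$ is finitely right equated if each $\mathbf{r}_S(a)$ is finitely generated as a right congruence. *)

From Stdlib Require Import List.

Definition associative_op {S : Type} (mul : S -> S -> S) : Prop :=
  forall x y z, mul x (mul y z) = mul (mul x y) z.

Definition prod_op {S T : Type} (mulS : S -> S -> S) (mulT : T -> T -> T)
  (p q : S * T) : S * T := (mulS (fst p) (fst q), mulT (snd p) (snd q)).

Definition right_congruence {S : Type} (mul : S -> S -> S) (rho : S -> S -> Prop) : Prop :=
  (forall s, rho s s) /\
  (forall s t, rho s t -> rho t s) /\
  (forall s t u, rho s t -> rho t u -> rho s u) /\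
  (forall s t u, rho s t -> rho (mul s u) (mul t u)).

Definition gen_right_congruence {S : Type} (mul : S -> S -> S) (X : list (S * S))
  (s t : S) : Prop :=
  forall rho, right_congruence mul rho ->
    (forall p, In p X -> rho (fst p) (snd p)) -> rho s t.

Definition fg_right_congruence {S : Type} (mul : S -> S -> S) (rho : S -> S -> Prop) : Prop :=
  exists X : list (S * S), forall s t, rho s t <-> gen_right_congruence mul X s t.

Definition r_ann {S : Type} (mul : S -> S -> S) (a : S) (s t : S) : Prop :=
  mul a s = mul a t.

Definition finitely_right_equated {S : Type} (mul : S -> S -> S) : Prop :=
  forall a, fg_right_congruence mul (r_ann mul a).

(* A projection of S x T onto a factor is a morphism, and images under a
   morphism of generating pairs generate the image of a generated right
   congruence.  Choosing a finite generating set for r((a, t0)), its image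
   under the projection generates r(a): one inclusion because every pair
   (s, s') of r(a) lifts to the pair ((s, t0), (s', t0)) of r((a, t0)), the
   other because r(a) is a right congruence containing the image pairs. *)

From Stdlib Require Import List.

Definition semigroup_morphism {U V : Type} (mulU : U -> U -> U) (mulV : V -> V -> V)
  (f : U -> V) : Prop :=
  forall u w, f (mulU u w) = mulV (f u) (f w).

Lemma r_ann_right_congruence {S : Type} (mul : S -> S -> S) (a : S) :
  associative_op mul -> right_congruence mul (r_ann mul a).
Proof.
  intros hmul; unfold r_ann; repeat split.
  - intros s t E; now rewrite E.
  - intros s t u E1 E2; now rewrite E1.
  - intros s t u E; now rewrite !hmul, E.
Qed.

Lemma gen_right_congruence_in {S : Type} (mul : S -> S -> S) (X : list (S * S)) p :
  In p X -> gen_right_congruence mul X (fst p) (snd p).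
Proof. intros Hp rho _ HX; now apply HX. Qed.

Lemma gen_right_congruence_right_congruence {S : Type} (mul : S -> S -> S)
  (X : list (S * S)) :
  right_congruence mul (gen_right_congruence mul X).
Proof.
  repeat split.
  - intros s rho [refl _] _; apply refl.
  - intros s t Hst rho Hrho HX; pose proof Hrho as [_ [sym _]].
    apply sym, (Hst rho Hrho HX).
  - intros s t u Hst Htu rho Hrho HX; pose proof Hrho as [_ [_ [trans _]]].
    exact (trans _ t _ (Hst rho Hrho HX) (Htu rho Hrho HX)).
  - intros s t u Hst rho Hrho HX; pose proof Hrho as [_ [_ [_ compat]]].
    apply compat, (Hst rho Hrho HX).
Qed.

Section Morphism.

Variables (U V : Type) (mulU : U -> U -> U) (mulV : V -> V -> V) (f : U -> V).
Hypothesis f_morph : semigroup_morphism mulU mulV f.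

Let map_pairs (X : list (U * U)) : list (V * V) :=
  map (fun p => (f (fst p), f (snd p))) X.

Lemma gen_right_congruence_morph (X : list (U * U)) u u' :
  gen_right_congruence mulU X u u' ->
  gen_right_congruence mulV (map_pairs X) (f u) (f u').
Proof.
  intros Hgen.
  apply (Hgen (fun p q => gen_right_congruence mulV (map_pairs X) (f p) (f q))).
  - pose proof (gen_right_congruence_right_congruence mulV (map_pairs X))
      as [refl [sym [trans compat]]].
    repeat split.
    + intros p; apply refl.
    + intros p q; apply sym.
    + intros p q r; apply trans.
    + intros p q w Hpq; rewrite !f_morph; now apply compat.
  - intros p Hp; exact (gen_right_congruence_in mulV _ (f (fst p), f (snd p))
                          (in_map _ X p Hp)).
Qed.

(* The lift [g] need not be a morphism. *)
Lemma finitely_right_equated_lift (g : V -> U) :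
  associative_op mulV ->
  (forall v, f (g v) = v) ->
  (forall a, exists b, f b = a /\
     forall s s', r_ann mulV a s s' -> r_ann mulU b (g s) (g s')) ->
  finitely_right_equated mulU -> finitely_right_equated mulV.
Proof.
  intros hV fg lift HU a.
  destruct (lift a) as [b [fb Hb]]; destruct (HU b) as [X HX].
  exists (map_pairs X); intros s s'; split.
  - intros Hss'; rewrite <- (fg s), <- (fg s').
    now apply gen_right_congruence_morph, HX, Hb.
  - intros Hgen; apply (Hgen _ (r_ann_right_congruence mulV a hV)).
    intros p Hp; apply in_map_iff in Hp; destruct Hp as [q [<- Hq]].
    pose proof (proj2 (HX _ _) (gen_right_congruence_in mulU X q Hq)) as E.
    unfold r_ann in *; simpl.
    now rewrite <- fb, <- !f_morph, E.
Qed.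

End Morphism.

Lemma finitely_right_equated_fst (S T : Type) (mulS : S -> S -> S) (mulT : T -> T -> T)
  (t0 : T) :
  associative_op mulS ->
  finitely_right_equated (prod_op mulS mulT) -> finitely_right_equated mulS.
Proof.
  intros hS.
  apply (finitely_right_equated_lift _ _ _ _ fst (fun _ _ => eq_refl)
           (fun s => (s, t0)) hS (fun _ => eq_refl)).
  intros a; exists (a, t0); split; [reflexivity|].
  intros s s' E; unfold r_ann, prod_op in *; simpl; now rewrite E.
Qed.

Lemma finitely_right_equated_snd (S T : Type) (mulS : S -> S -> S) (mulT : T -> T -> T)
  (s0 : S) :
  associative_op mulT ->
  finitely_right_equated (prod_op mulS mulT) -> finitely_right_equated mulT.
Proof.
  intros hT.
  apply (finitely_right_equated_lift _ _ _ _ snd (fun _ _ => eq_refl)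
           (fun t => (s0, t)) hT (fun _ => eq_refl)).
  intros a; exists (s0, a); split; [reflexivity|].
  intros t t' E; unfold r_ann, prod_op in *; simpl; now rewrite E.
Qed.

Theorem mainTheorem17 (S T : Type) (mulS : S -> S -> S) (mulT : T -> T -> T)
  (hS : associative_op mulS) (hT : associative_op mulT)
  (neS : inhabited S) (neT : inhabited T) :
  finitely_right_equated (prod_op mulS mulT) ->
  finitely_right_equated mulS /\ finitely_right_equated mulT.
Proof.
  intros H; destruct neS as [s0], neT as [t0]; split.
  - exact (finitely_right_equated_fst S T mulS mulT t0 hS H).
  - exact (finitely_right_equated_snd S T mulS mulT s0 hT H).
Qed.
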